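(* Fix a positive integer $g$ and constants $\epsilon>0$, $b>0$, $\eta>0$. For each $N$, let $G_N$ be a random graph drawn from an inhomogeneous random graph model on the node set $V=\{1,\dots,N\}$ with edge probabilities $p_{ij}$ ($i\neq j$) satisfying $p_{ij}>(1+\epsilon)/N$ for all $i\neq j$. Suppose that the set $V_p\subset V$ of nodes $i$ such that $p_{ij}<b/N$ for all $j\neq i$ satisfies $|V_p|>\eta N$. Let $D_g(N)$ denote the number of subsets $S\subset V$ that are $g$-dangling in $G_N$. Then $\mathbb{E}[D_g(N)]$ grows proportionally to $N$: there exist constants $c>0$ and $N_0$ (depending on $g,\epsilon,b,\eta$ but not on $N$) such that $cN\le \mathbb{E}[D_g(N)]\le N$ for all $N\ge N_0$.
   Context: An inhomogeneous random graph model on $N$ nodes is a random undirected graph without self-loops in which each pair $\{i,j\}$, $i\neq j$, is an edge independently with probability $p_{ij}$. In an unweighted graph $G=(V,E)$, a subset $S\subset V$ is called $g$-dangling if: (i) $|S|=g$; (ii) the node-induced subgraph on $S$ has exactly $g-1$ edges and contains no cycle (i.e., it is a tree); (iii) there is exactly one edge of $G$ with one endpoint in $S$ and the other in $V\setminus S$. *)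

From HB Require Import structures.
From mathcomp Require Import all_boot all_order all_algebra.
Set Implicit Arguments. Unset Strict Implicit. Unset Printing Implicit Defensive.
Import Order.TTheory GRing.Theory Num.Theory.

(* A simple undirected graph on the node set 'I_N (nodes 1..N, 0-indexed)
   is encoded by its edge set E of ordered pairs (i,j) with i < j
   (one representative per unordered pair {i,j}). *)
Definition upper_pairs (N : nat) : {set 'I_N * 'I_N} :=
  [set ij : 'I_N * 'I_N | (ij.1 < ij.2)%N].

Definition is_graph (N : nat) (E : {set 'I_N * 'I_N}) : bool :=
  E \subset upper_pairs N.

Definition adj (N : nat) (E : {set 'I_N * 'I_N}) : rel 'I_N :=
  fun i j => ((i, j) \in E) || ((j, i) \in E).

Definition n_inner_edges (N : nat) (E : {set 'I_N * 'I_N}) (S : {set 'I_N}) : nat :=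
  #|[set ij in E | (ij.1 \in S) && (ij.2 \in S)]|.

Definition n_boundary_edges (N : nat) (E : {set 'I_N * 'I_N}) (S : {set 'I_N}) : nat :=
  #|[set ij in E | (ij.1 \in S) != (ij.2 \in S)]|.

(* A duplicate-free sequence of nodes has length <= N, so bounding k by N
   loses nothing. *)
Definition induced_acyclic (N : nat) (E : {set 'I_N * 'I_N}) (S : {set 'I_N}) : bool :=
  [forall k : 'I_N.+1, forall t : k.-tuple 'I_N,
     ~~ [&& (3 <= k)%N, uniq t, all (fun x => x \in S) t & cycle (adj E) t]].

Definition dangling (N g : nat) (E : {set 'I_N * 'I_N}) (S : {set 'I_N}) : bool :=
  [&& #|S| == g, n_inner_edges E S == g.-1, induced_acyclic E S
    & n_boundary_edges E S == 1%N].

Definition num_dangling (N g : nat) (E : {set 'I_N * 'I_N}) : nat :=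
  #|[set S : {set 'I_N} | dangling g E S]|.

Local Open Scope ring_scope.

(* probability of the graph E in the inhomogeneous random graph model with
   edge probabilities p (each pair {i,j}, i<j, independently an edge w.p. p i j) *)
Definition graph_prob (R : pzRingType) (N : nat) (p : 'I_N -> 'I_N -> R)
    (E : {set 'I_N * 'I_N}) : R :=
  \prod_(ij in upper_pairs N)
     (if ij \in E then p ij.1 ij.2 else 1 - p ij.1 ij.2).

Definition expected_dangling (R : pzRingType) (N g : nat) (p : 'I_N -> 'I_N -> R) : R :=
  \sum_(E : {set 'I_N * 'I_N} | is_graph E) graph_prob p E * (num_dangling g E)%:R.

Definition Vp (R : numFieldType) (N : nat) (b : R) (p : 'I_N -> 'I_N -> R) : {set 'I_N} :=
  [set i | [forall j, (j != i) ==> (p i j < b / N%:R)]].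

From HB Require Import structures.
From mathcomp Require Import all_boot all_order all_algebra.
From mathcomp Require Import zify ring lra.
Set Implicit Arguments. Unset Strict Implicit. Unset Printing Implicit Defensive.
Import Order.TTheory GRing.Theory Num.Theory.

(* Upper bound, valid for every graph: a g-dangling set is a tree with a single
   exit edge, so the exit edge of a dangling set lies inside every other
   dangling set meeting it.  Hence sending one dangling set S1 through a node w
   to the inner end of its exit edge, and every other one to the outer end of
   its own, injects the dangling sets through w into S1: each node lies in at
   most g of them and D_g <= N.

   Lower bound: for a g-subset S of V_p with a fixed center c and a node v
   outside S, let the pairs touching S carry exactly the star joining c to the
   other nodes of S and to v.  This event makes S dangling, the events for
   distinct v are disjoint, and by independence it has probability at least
   N^-g (1 - b/N)^(2gN) >= N^-g 4^(-4Kg) for an integer K >= b.  There are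
   C(|V_p|, g) (N - g) such events, which is of order N^(g+1) as |V_p| > eta N. *)

(** * Acyclic induced subgraphs *)

Lemma size_uniq_ord_le N (s : seq 'I_N) : uniq s -> (size s <= N)%N.
Proof. by move/card_uniqP <-; rewrite -[X in (_ <= X)%N]card_ord max_card. Qed.

Section Forest.
Variables (N : nat) (E : {set 'I_N * 'I_N}).
Hypothesis E_graph : is_graph E.

Lemma graph_edge_ltn ij : ij \in E -> (ij.1 < ij.2)%N.
Proof. by move/(subsetP E_graph); rewrite inE. Qed.

Lemma adj_sym : symmetric (adj E).
Proof. by move=> x y; rewrite /adj orbC. Qed.

Lemma adj_irrefl x : adj E x x = false.
Proof. by rewrite /adj orbb; apply/negP => /graph_edge_ltn; rewrite ltnn. Qed.

Lemma graph_edge_antisym x y : (x, y) \in E -> (y, x) \in E -> False.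
Proof. by move=> /graph_edge_ltn xy /graph_edge_ltn /(ltn_trans xy); rewrite ltnn. Qed.

Lemma acyclic_no_cycle S (t : seq 'I_N) : induced_acyclic E S ->
  (3 <= size t)%N -> uniq t -> all (mem S) t -> ~~ cycle (adj E) t.
Proof.
move=> /forallP acyc t3 t_uniq tS; apply/negP => t_cycle.
have t_small : (size t < N.+1)%N by rewrite ltnS size_uniq_ord_le.
move/forallP: (acyc (Ordinal t_small)) => /(_ (@Tuple _ _ t (eqxx _))) /=.
by rewrite t3 t_uniq tS t_cycle.
Qed.

Section Leaf.
Variables (S B : {set 'I_N}).
Hypotheses (acyc : induced_acyclic E S) (sBS : B \subset S).
Hypothesis two_nbrs : forall x, x \in B ->
  exists y1 y2, [/\ y1 \in B, y2 \in B, y1 != y2, adj E x y1 & adj E x y2].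

(* A path [x :: s] can always be extended at [x] by a neighbour avoiding the
   head of [s]; if this neighbour already lies on the path, it closes a cycle. *)
Lemma acyclic_path_extend x s : uniq (x :: s) -> all (mem B) (x :: s) ->
  path (adj E) x s ->
  exists y, [/\ uniq (y :: x :: s), y \in B & path (adj E) y (x :: s)].
Proof.
move=> xs_uniq xsB xs_path.
have xB : x \in B by case/andP: xsB.
have [y1 [y2 [y1B y2B y12 xy1 xy2]]] := two_nbrs xB.
have [y [yB xy y_head]] : exists y, [/\ y \in B, adj E x y & y \notin take 1 s].
  case: s {xs_uniq xsB xs_path} => [|z s] /=; first by exists y1; split.
  case: (eqVneq y1 z) => [<-|y1z]; last by exists y1; split; rewrite // take0 inE.
  by exists y2; split; rewrite // take0 inE eq_sym.
exists y; rewrite /= adj_sym xy xs_path yB andbT -/(uniq (x :: s)) xs_uniq andbT.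
split=> //; apply/negP => y_xs.
have yx : y != x by apply: contraTneq xy => ->; rewrite adj_irrefl.
have y_s : y \in s by move: y_xs; rewrite inE (negbTE yx).
case/splitPr: y_s xs_uniq xsB xs_path y_head => s1 s2 xs_uniq xsB xs_path y_head.
case: s1 => [|z s1] in xs_uniq xsB xs_path y_head *; first by rewrite /= inE eqxx in y_head.
have : ~~ cycle (adj E) (x :: z :: rcons s1 y).
  apply: (acyclic_no_cycle acyc); first by rewrite /= size_rcons.
    by move: xs_uniq; rewrite -cat_cons -cat_rcons cat_uniq => /andP [].
  apply/allP => u u_in; apply: (subsetP sBS); move/allP: xsB; apply.
  by rewrite -cat_cons -cat_rcons mem_cat u_in.
move/negP; apply; move: xs_path; rewrite -cat_rcons cat_path => /andP [p1 _].
by rewrite /cycle rcons_path -rcons_cons p1 last_rcons adj_sym xy.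
Qed.

Lemma acyclic_long_path x0 : x0 \in B -> forall n,
  exists x s, [/\ size s = n, uniq (x :: s), all (mem B) (x :: s) & path (adj E) x s].
Proof.
move=> x0B; elim=> [|n [x [s [<- xs_uniq xsB xs_path]]]]; first by exists x0, [::]; rewrite /= x0B.
have [y [ys_uniq yB ys_path]] := acyclic_path_extend xs_uniq xsB xs_path.
by exists y, (x :: s); rewrite /= yB.
Qed.

End Leaf.

Lemma acyclic_leaf S (B : {set 'I_N}) : induced_acyclic E S -> B \subset S -> B != set0 ->
  exists2 x, x \in B & {in B &, forall y z, adj E x y -> adj E x z -> y = z}.
Proof.
move=> acyc sBS /set0Pn [x0 x0B].
case: (boolP [exists x in B, forall y in B, forall z in B,
                adj E x y ==> adj E x z ==> (y == z)]).
  case/exists_inP => x xB /forall_inP leaf; exists x => // y z yB zB xy xz.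
  by apply/eqP; move/forall_inP: (leaf y yB) => /(_ z zB); rewrite xy xz.
move/exists_inPn => no_leaf; exfalso.
have [|x [s [sN s_uniq _ _]]] := acyclic_long_path acyc sBS _ x0B N.
  move=> x xB; have /forall_inPn [y1 y1B /forall_inPn [y2 y2B]] := no_leaf x xB.
  by rewrite !negb_imply => /and3P [xy1 xy2 y12]; exists y1, y2.
by have := size_uniq_ord_le s_uniq; rewrite /= sN ltnn.
Qed.

Lemma n_inner_edges_leaf (B : {set 'I_N}) x : x \in B ->
  {in B &, forall y z, adj E x y -> adj E x z -> y = z} ->
  (n_inner_edges E B <= (n_inner_edges E (B :\ x)).+1)%N.
Proof.
move=> xB leaf.
set Ex := [set ij in E | [&& ij.1 \in B, ij.2 \in B & x \in [:: ij.1; ij.2]]].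
have Ex_le1 : (#|Ex| <= 1)%N.
  apply/card_le1_eqP => [[a b] [c d]]; rewrite !inE /=.
  move=> /and4P [abE aB bB xab] /and4P [cdE cB dB xcd].
  have ab : adj E a b by rewrite /adj abE.
  have cd : adj E c d by rewrite /adj cdE.
  move: xab xcd ab cd abE cdE => /orP [] /eqP <- /orP [] /eqP <- xy xz abE cdE.
  - by rewrite (leaf _ _ bB dB xy xz).
  - rewrite adj_sym in xz; rewrite (leaf _ _ bB cB xy xz) in abE.
    by case: (graph_edge_antisym abE cdE).
  - rewrite adj_sym in xy; rewrite (leaf _ _ aB dB xy xz) in abE.
    by case: (graph_edge_antisym abE cdE).
  - by rewrite !(adj_sym _ x) in xy xz; rewrite (leaf _ _ aB cB xy xz).
suff : (n_inner_edges E B <= n_inner_edges E (B :\ x) + #|Ex|)%N by move: Ex_le1; lia.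
rewrite /n_inner_edges; apply: leq_trans (leq_card_setU _ _); apply: subset_leq_card.
apply/subsetP => ij; rewrite !inE => /and3P [ijE i1 i2].
by rewrite ijE i1 i2 /= !andbT ![x == _]eq_sym; case: eqP; case: eqP.
Qed.

Lemma n_inner_edges1 x : n_inner_edges E [set x] = 0%N.
Proof.
apply/eqP; rewrite cards_eq0; apply/eqP/setP => ij; rewrite !inE.
by apply/negP => /and3P [/graph_edge_ltn + /eqP e1 /eqP e2]; rewrite e1 e2 ltnn.
Qed.

Lemma acyclic_inner_edges_lt S (B : {set 'I_N}) : induced_acyclic E S -> B \subset S -> B != set0 ->
  (n_inner_edges E B < #|B|)%N.
Proof.
move=> acyc; elim: #|B| {-2}B (leqnn #|B|) => [|n IH] {}B Bn sBS B0.
  by move: B0; rewrite -card_gt0; case: #|B| Bn.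
have [x xB leaf] := acyclic_leaf acyc sBS B0.
have cardB : #|B| = #|B :\ x|.+1 by rewrite (cardsD1 x B) xB.
case: (eqVneq (B :\ x) set0) => [Bx0|Bx0].
  have -> : B = [set x] by apply/eqP; rewrite eqEsubset -setD_eq0 Bx0 eqxx sub1set xB.
  by rewrite n_inner_edges1 cards1.
apply: leq_ltn_trans (n_inner_edges_leaf xB leaf) _; rewrite cardB ltnS.
by apply: IH => //; [rewrite -ltnS -cardB | apply: subset_trans (subD1set B x) sBS].
Qed.
End Forest.

(** * Dangling sets *)

Lemma n_inner_edges_split N (E : {set 'I_N * 'I_N}) (S A : {set 'I_N}) :
  {in A & S :\: A, forall x y, ~~ adj E x y} ->
  (n_inner_edges E S <= n_inner_edges E A + n_inner_edges E (S :\: A))%N.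
Proof.
move=> no_edge; rewrite /n_inner_edges; apply: leq_trans (leq_card_setU _ _).
apply: subset_leq_card; apply/subsetP => -[a b]; rewrite !inE /= => /and3P [abE aS bS].
rewrite abE aS bS /=; case: (boolP (a \in A)) => aA; case: (boolP (b \in A)) => bA //=.
- by move: (no_edge a b aA); rewrite !inE bA bS /adj abE => /(_ isT).
- by move: (no_edge b a bA); rewrite !inE aA aS /adj abE orbT => /(_ isT).
Qed.

Section Dangling.
Variables (N g : nat) (E : {set 'I_N * 'I_N}).
Hypothesis E_graph : is_graph E.
Implicit Types (S T A : {set 'I_N}) (x y w : 'I_N).

Lemma dangling_card S : dangling g E S -> #|S| = g.
Proof. by case/and4P => /eqP. Qed.

Lemma dangling_connected S A : dangling g E S -> A \subset S -> A != set0 ->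
  S :\: A != set0 -> exists x y, [/\ x \in A, y \in S :\: A & adj E x y].
Proof.
case/and4P => /eqP cardS /eqP innerS acyc _ sAS A0 SA0.
case: (boolP [exists x in A, exists y in S :\: A, adj E x y]).
  by case/exists_inP => x xA /exists_inP [y yA xy]; exists x, y.
move/exists_inPn => no_edge; exfalso.
have no_adj : {in A & S :\: A, forall x y, ~~ adj E x y}.
  by move=> x y xA; move/exists_inPn: (no_edge x xA); apply.
have := n_inner_edges_split no_adj.
have := acyclic_inner_edges_lt E_graph acyc sAS A0.
have := acyclic_inner_edges_lt E_graph acyc (subsetDl S A) SA0.
have : #|S| = (#|A| + #|S :\: A|)%N by rewrite -(cardsID A S) (setIidPr sAS).
by move: cardS innerS; lia.
Qed.

Lemma dangling_boundary_uniq S x y x' y' : dangling g E S ->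
  x \in S -> y \notin S -> adj E x y -> x' \in S -> y' \notin S -> adj E x' y' ->
  (x, y) = (x', y').
Proof.
case/and4P => _ _ _ /eqP/eqP bnd1 xS yS xy x'S y'S x'y'.
have /card_le1_eqP bnd_eq : (#|[set ij in E | (ij.1 \in S) != (ij.2 \in S)]| <= 1)%N
  by rewrite leq_eqVlt bnd1.
have in_bnd u v : u \in S -> v \notin S -> adj E u v ->
    (u, v) \in [set ij in E | (ij.1 \in S) != (ij.2 \in S)] \/
    (v, u) \in [set ij in E | (ij.1 \in S) != (ij.2 \in S)].
  by move=> uS vS; rewrite /adj !inE /= uS (negbTE vS); case/orP => ->; [left|right].
case: (in_bnd _ _ xS yS xy) => e; case: (in_bnd _ _ x'S y'S x'y') => e';
  case: (bnd_eq _ _ e e') => e1 e2.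
- by rewrite e1 e2.
- by rewrite -e1 (negbTE y'S) in xS.
- by rewrite e1 (negbTE yS) in x'S.
- by rewrite e1 e2.
Qed.

Definition boundary_edge (d : 'I_N) S : 'I_N * 'I_N :=
  odflt (d, d) [pick xy | [&& xy.1 \in S, xy.2 \notin S & adj E xy.1 xy.2]].

Lemma boundary_edgeE d S x y : dangling g E S ->
  x \in S -> y \notin S -> adj E x y -> boundary_edge d S = (x, y).
Proof.
move=> dS xS yS xy; rewrite /boundary_edge; case: pickP => [[x' y'] /and3P [] | /(_ (x, y))].
  by move=> x'S y'S x'y' /=; apply: dangling_boundary_uniq x'S y'S x'y' xS yS xy.
by rewrite /= xS yS xy.
Qed.

Lemma dangling_boundary_edge d S : dangling g E S ->
  [/\ (boundary_edge d S).1 \in S, (boundary_edge d S).2 \notin S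
    & adj E (boundary_edge d S).1 (boundary_edge d S).2].
Proof.
move=> dS; have /card_gt0P [[a b]] : (0 < n_boundary_edges E S)%N.
  by case/and4P: dS => _ _ _ /eqP ->.
rewrite inE /= => /andP [abE].
have ab : adj E a b by rewrite /adj abE.
case: (boolP (a \in S)) => aS; case: (boolP (b \in S)) => bS //= _.
- by rewrite (boundary_edgeE d dS aS bS ab).
- by rewrite adj_sym in ab; rewrite (boundary_edgeE d dS bS aS ab).
Qed.

Lemma dangling_overlap_boundary d S T w : dangling g E S -> dangling g E T ->
  S != T -> w \in S -> w \in T ->
  (boundary_edge d S).1 \in T /\ (boundary_edge d S).2 \in T.
Proof.
move=> dS dT ST wS wT.
have [||x [y [xST yTS xy]]] := @dangling_connected T (S :&: T) dT (subsetIr S T).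
- by apply/set0Pn; exists w; rewrite inE wS wT.
- apply/set0Pn; case: (boolP (T \subset S)) => [sTS | /subsetPn [z zT zS]].
    by move: ST; rewrite eq_sym eqEcard sTS (dangling_card dS) (dangling_card dT) leqnn.
  by exists z; rewrite !inE zT (negbTE zS).
move: xST yTS; rewrite !inE => /andP [xS xT] /andP [/nandP [yS | /negP //] yT].
by rewrite (boundary_edgeE d dS xS yS xy).
Qed.

Lemma card_dangling_through w : (#|[set S | dangling g E S & w \in S]| <= g)%N.
Proof.
set F := [set S | _ & _].
have [->|[S1 S1F]] := set_0Vmem F; first by rewrite cards0.
have dS1 : dangling g E S1 by move: S1F; rewrite inE => /andP [].
have overlap S T : S \in F -> T \in F -> S != T ->
    (boundary_edge w S).1 \in T /\ (boundary_edge w S).2 \in T.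
  rewrite !inE => /andP [dS wS] /andP [dT wT] ST.
  exact: dangling_overlap_boundary dS dT ST wS wT.
have outside S : S \in F -> (boundary_edge w S).2 \notin S.
  by rewrite inE => /andP [dS _]; case: (dangling_boundary_edge w dS).
pose f S := if S == S1 then (boundary_edge w S1).1 else (boundary_edge w S).2.
have f_inj : {in F &, injective f}.
  move=> S T SF TF; apply: contra_eq => ST; rewrite /f.
  case: (eqVneq S S1) => [eS|nS]; case: (eqVneq T S1) => [eT|nT].
  - by rewrite eS eT eqxx in ST.
  - rewrite eS in ST SF.
    by apply: (contraTneq _ (overlap _ _ SF TF ST).1) => ->; apply: outside.
  - rewrite eT eq_sym in ST TF; rewrite eq_sym.
    by apply: (contraTneq _ (overlap _ _ TF SF ST).1) => ->; apply: outside.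
  - by apply: (contraTneq _ (overlap _ _ SF TF ST).2) => ->; apply: outside.
rewrite -(card_in_imset f_inj) -(dangling_card dS1); apply: subset_leq_card.
apply/subsetP => _ /imsetP [S SF ->]; rewrite /f; case: eqVneq => [_|nS].
  by case: (dangling_boundary_edge w dS1).
by case: (overlap _ _ SF S1F nS).
Qed.

Lemma num_dangling_le : (0 < g)%N -> (num_dangling g E <= N)%N.
Proof.
move=> g_gt0; rewrite -(leq_pmul2r g_gt0) -[X in (_ <= X * _)%N]card_ord.
rewrite -!sum_nat_const.
have -> : (\sum_(S in [set S | dangling g E S]) g = \sum_(S in [set S | dangling g E S]) #|S|)%N.
  by apply: eq_bigr => S; rewrite inE => /dangling_card.
rewrite (eq_bigr (fun S => \sum_(w : 'I_N) (w \in S : nat))%N); last first.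
  by move=> S _; rewrite -sum1_card big_mkcond.
rewrite exchange_big; apply: leq_sum => w _; apply: leq_trans (card_dangling_through w).
rewrite -sum1_card big_mkcond [X in (_ <= X)%N]big_mkcond; apply: leq_sum => S _.
by rewrite !inE; case: (dangling _ _ _); case: (w \in S).
Qed.
End Dangling.

(** * Independence of the edges *)

Local Open Scope ring_scope.

Section GraphProb.
Variables (R : comPzRingType) (N : nat) (p : 'I_N -> 'I_N -> R).

Lemma prod_natr_bool (I : finType) (P : pred I) (c : pred I) :
  \prod_(i | P i) (c i)%:R = [forall (i | P i), c i]%:R :> R.
Proof.
case: (boolP [forall (i | P i), c i]) => [/forall_inP c_all | /forall_inPn [i Pi ci]].
  by rewrite big1 // => i /c_all ->.
by rewrite (bigD1 i) //= (negbTE ci) mul0r.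
Qed.

(* Fixing the edges inside [F] to be exactly [A] leaves the other factors of
   the product free, and each of them sums to [1]. *)
Lemma graph_prob_marginal (F A : {set 'I_N * 'I_N}) : A \subset F :&: upper_pairs N ->
  \sum_(E | is_graph E && (E :&: F == A)) graph_prob p E =
  \prod_(u in upper_pairs N)
     (if u \in F then (if u \in A then p u.1 u.2 else 1 - p u.1 u.2) else 1).
Proof.
move=> sAFU; set U := upper_pairs N.
pose w u (b : bool) := if b then p u.1 u.2 else 1 - p u.1 u.2.
pose h u b := (if u \in U then w u b else (~~ b)%:R) * ((u \in F) ==> (b == (u \in A)))%:R.
have graphE E : is_graph E = [forall (u | u \notin U), u \notin E].
  apply/subsetP/forall_inP => [sEU u | notE u uE]; first by apply: contra => /sEU.
  by apply: contraT => /notE; rewrite uE.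
have traceE E : (E :&: F == A) = [forall (u | u \in F), (u \in E) == (u \in A)].
  apply/eqP/forall_inP => [<- u uF | EA]; first by rewrite inE uF andbT.
  apply/setP => u; rewrite inE; case: (boolP (u \in F)) => uF.
    by rewrite andbT (eqP (EA u uF)).
  by rewrite andbF; apply/esym/negbTE; apply: contra uF => /(subsetP sAFU); rewrite inE => /andP [].
transitivity (\sum_(E : {set 'I_N * 'I_N}) \prod_u h u (u \in E)).
  rewrite big_mkcond /=; apply: eq_bigr => E _.
  rewrite big_split /= (bigID (mem U)) /= prod_natr_bool -traceE.
  have -> : \prod_(u in U) (if u \in U then w u (u \in E) else (u \notin E)%:R) = graph_prob p E.
    by apply: eq_bigr => u ->.
  have -> : \prod_(u | u \notin U) (if u \in U then w u (u \in E) else (u \notin E)%:R) =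
      (is_graph E)%:R.
    by rewrite graphE -prod_natr_bool; apply: eq_bigr => u /negbTE ->.
  by case: (is_graph E); case: (E :&: F == A); rewrite ?mulr1 ?mulr0.
rewrite (eq_bigr (fun E : {set 'I_N * 'I_N} =>
  \prod_u (if u \in E then h u true else h u false))); last first.
  by move=> E _; apply: eq_bigr => u _; case: (u \in E).
rewrite -bigA_distr [RHS]big_mkcond /=; apply: eq_bigr => u _.
rewrite /h /w; case: (boolP (u \in U)) => uU /=.
  case: (boolP (u \in F)) => uF /=; last by rewrite !mulr1 addrC subrK.
  by case: (u \in A); rewrite /= ?mulr1 ?mulr0 ?addr0 ?add0r.
have -> : u \in A = false.
  by apply: contraNF uU => /(subsetP sAFU); rewrite inE => /andP [].
by rewrite mul0r add0r mul1r eqxx implybT.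
Qed.
End GraphProb.

Lemma graph_prob_sum1 (R : comPzRingType) N (p : 'I_N -> 'I_N -> R) :
  \sum_(E | is_graph E) graph_prob p E = 1.
Proof.
rewrite (eq_bigl (fun E => is_graph E && (E :&: set0 == set0))); last first.
  by move=> E; rewrite setI0 eqxx andbT.
by rewrite graph_prob_marginal ?sub0set // big1 // => u _; rewrite in_set0.
Qed.

Section ProbBounds.
Variables (R : numDomainType) (N : nat) (p : 'I_N -> 'I_N -> R).
Hypothesis p_prob : forall i j, i != j -> 0 <= p i j <= 1.

Lemma graph_prob_ge0 E : 0 <= graph_prob p E.
Proof.
apply: prodr_ge0 => -[i j]; rewrite inE /= => ij.
have /andP [p0 p1] : 0 <= p i j <= 1 by apply: p_prob; rewrite neq_ltn ij.
by case: ifP; rewrite ?subr_ge0.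
Qed.

Lemma expected_dangling_le g : (0 < g)%N -> expected_dangling g p <= N%:R.
Proof.
move=> g_gt0; apply: (@le_trans _ _ (\sum_(E | is_graph E) graph_prob p E * N%:R)).
  apply: ler_sum => E E_graph; apply: ler_wpM2l; first exact: graph_prob_ge0.
  by rewrite ler_nat num_dangling_le.
by rewrite -mulr_suml graph_prob_sum1 mul1r.
Qed.

End ProbBounds.

(** * Star events *)

Definition upair N (x y : 'I_N) : 'I_N * 'I_N := if (x < y)%N then (x, y) else (y, x).

Definition touching N (S : {set 'I_N}) : {set 'I_N * 'I_N} :=
  [set ij | (ij.1 \in S) || (ij.2 \in S)].

Definition star N (S : {set 'I_N}) (c v : 'I_N) : {set 'I_N * 'I_N} :=
  [set upair c y | y in (v |: S) :\ c].

Lemma upairE N (x y : 'I_N) : upair x y = (x, y) \/ upair x y = (y, x).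
Proof. by rewrite /upair; case: ifP; [left | right]. Qed.

Lemma upair_inj N (c y y' : 'I_N) : y != c -> y' != c -> upair c y = upair c y' -> y = y'.
Proof.
move=> yc y'c; case: (upairE c y) => ->; case: (upairE c y') => -> [] //.
- by move=> e; rewrite e eqxx in y'c.
- by move=> e; rewrite e eqxx in yc.
Qed.

Section Star.
Variables (N : nat) (E : {set 'I_N * 'I_N}) (S : {set 'I_N}) (c v : 'I_N).
Hypotheses (cS : c \in S) (vS : v \notin S).

Lemma star_sub : star S c v \subset touching S :&: upper_pairs N.
Proof.
apply/subsetP => ij /imsetP [y]; rewrite !inE => /andP [yc _] ->.
rewrite /upair; case: ltnP => yc' /=; rewrite cS ?orbT //=.
by rewrite ltn_neqAle yc' andbT; apply: contra yc => /eqP/val_inj ->.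
Qed.

Lemma upair_star_ends y : ((upair c y).1 \in S) && ((upair c y).2 \in S) = (y \in S).
Proof. by case: (upairE c y) => -> /=; rewrite cS ?andbT. Qed.

Lemma upair_star_cross y : ((upair c y).1 \in S) != ((upair c y).2 \in S) = (y \notin S).
Proof. by case: (upairE c y) => -> /=; rewrite cS //; case: (y \in S). Qed.

Hypothesis star_event : E :&: touching S = star S c v.

Lemma star_edgeE ij : ij \in touching S -> (ij \in E) = (ij \in star S c v).
Proof. by move=> ijS; rewrite -star_event inE ijS andbT. Qed.

Lemma star_adj x y : x \in S -> adj E x y -> (x == c) || (y == c).
Proof.
move=> xS xy; have [ij ijE ends] : exists2 ij, ij \in E & ij = (x, y) \/ ij = (y, x).
  by move: xy; rewrite /adj => /orP []; [exists (x, y); [|left] | exists (y, x); [|right]].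
have ijS : ij \in touching S by case: ends => ->; rewrite inE xS ?orbT.
have := star_edgeE ijS; rewrite ijE => /esym/imsetP [z _ e].
have : (ij.1 == c) || (ij.2 == c) by rewrite e; case: (upairE c z) => ->; rewrite eqxx ?orbT.
by case: ends => -> //=; rewrite orbC.
Qed.

Lemma star_inner_edges : n_inner_edges E S = #|S|.-1.
Proof.
rewrite /n_inner_edges.
have -> : [set ij in E | (ij.1 \in S) && (ij.2 \in S)] = upair c @: (S :\ c).
  apply/setP => ij; rewrite inE; apply/andP/imsetP => [[ijE ends] | [y]].
    have ijS : ij \in touching S by rewrite inE; case/andP: ends => ->.
    move: ijE; rewrite star_edgeE // => /imsetP [y]; rewrite !inE => /andP [yc _] e.
    by exists y; rewrite // !inE yc -upair_star_ends -e.
  rewrite !inE => /andP [yc yS] ->; split; last by rewrite upair_star_ends.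
  rewrite star_edgeE; last by rewrite inE; move: (upair_star_ends y); rewrite yS => /andP [->].
  by apply/imsetP; exists y; rewrite // !inE yc yS orbT.
rewrite card_in_imset => [|y y']; first by rewrite (cardsD1 c S) cS.
by rewrite !inE => /andP [yc _] /andP [y'c _]; apply: upair_inj.
Qed.

(* Every edge at a node of [S] passes through [c]; a cycle through a node
   [x1 != c] would need both its neighbours on the cycle to be [c]. *)
Lemma star_acyclic : induced_acyclic E S.
Proof.
apply/forallP => k; apply/forallP => -[s /= /eqP size_s]; rewrite -{}size_s.
apply/negP; case: s => [|x0 [|x1 [|x2 r]]] //=.
case/and5P => /and4P [+ + _ _] /and4P [x0S x1S x2S /allP rS] a01 a12.
rewrite !inE !negb_or => /and3P [n01 n02 _] /andP [n12 n1r].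
rewrite rcons_path => /andP [_ al0].
set l := last x2 r in al0.
have l_in : l \in x2 :: r by apply: mem_last.
have lS : l \in S by move: l_in; rewrite inE => /orP [/eqP ->|/rS].
have n1l : x1 != l by apply: contraNneq n12 => e; move: l_in; rewrite -e inE (negbTE n1r) orbF.
have := star_adj x0S a01; have := star_adj x1S a12; have := star_adj lS al0.
case: (eqVneq x1 c) => [e1 | ne1] /=.
  case/orP => /eqP e _ _; first by rewrite e1 e eqxx in n1l.
  by rewrite e1 e eqxx in n01.
by rewrite !orbF => _ /eqP e2 /eqP e0; rewrite e0 e2 eqxx in n02.
Qed.

Lemma star_boundary : n_boundary_edges E S = 1%N.
Proof.
rewrite /n_boundary_edges -(cards1 (upair c v)); congr #|pred_of_set _|.
apply/setP => ij; rewrite !inE.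
apply/andP/eqP => [[ijE cross] | ->].
  have ijS : ij \in touching S by rewrite inE; move: cross; case: (ij.1 \in S); case: (ij.2 \in S).
  move: ijE; rewrite star_edgeE // => /imsetP [y]; rewrite !inE => /andP [_ /orP [/eqP -> //|yS] e].
  by move: cross; rewrite e upair_star_cross yS.
have vc : v != c by apply: contraNneq vS => ->.
have vS' : (upair c v).1 \in S != ((upair c v).2 \in S) by rewrite upair_star_cross.
split; last exact: vS'.
rewrite star_edgeE; last first.
  by rewrite inE; move: vS'; case: ((upair c v).1 \in S); case: ((upair c v).2 \in S).
by apply/imsetP; exists v; rewrite // !inE vc eqxx.
Qed.

Lemma star_dangling : dangling #|S| E S.
Proof. by rewrite /dangling eqxx star_inner_edges eqxx star_acyclic star_boundary. Qed.

End Star.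

Lemma star_inj N (S : {set 'I_N}) c v1 v2 : c \in S -> v1 \notin S -> v2 \notin S ->
  star S c v1 = star S c v2 -> v1 = v2.
Proof.
move=> cS v1S v2S e; have v1c : v1 != c by apply: contraNneq v1S => ->.
have : upair c v1 \in star S c v2 by rewrite -e; apply/imsetP; exists v1; rewrite // !inE v1c eqxx.
case/imsetP => y; rewrite !inE => /andP [yc yv2S] /(upair_inj v1c yc) v1y.
by case/orP: yv2S => [/eqP <- // | yS]; rewrite v1y yS in v1S.
Qed.

Definition star_events N (E : {set 'I_N * 'I_N}) (center : {set 'I_N} -> 'I_N)
    (S : {set 'I_N}) : {set 'I_N} :=
  [set v | (v \notin S) && (E :&: touching S == star S (center S) v)].

Lemma card_star_events N (E : {set 'I_N * 'I_N}) center S :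
  #|star_events E center S| = (\sum_(v in ~: S) (E :&: touching S == star S (center S) v))%N.
Proof.
rewrite -sum1_card big_mkcond [RHS]big_mkcond /=; apply: eq_bigr => v _.
by rewrite !inE; case: (v \in S); case: (_ == _).
Qed.

Lemma card_star_events_le N (E : {set 'I_N * 'I_N}) center (S : {set 'I_N}) :
  center S \in S ->
  (#|star_events E center S| <= dangling #|S| E S)%N.
Proof.
move=> cS; have [->|[v]] := set_0Vmem (star_events E center S); first by rewrite cards0.
rewrite inE => /andP [vS /eqP ev]; rewrite (star_dangling cS vS ev).
apply/card_le1_eqP => v1 v2; rewrite !inE => /andP [v1S /eqP e1] /andP [v2S /eqP e2].
by apply/esym/(star_inj cS v1S v2S); rewrite -e1 -e2.
Qed.

Lemma sum_star_events_le N g (E : {set 'I_N * 'I_N}) center (V : {set 'I_N}) :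
  (forall S : {set 'I_N}, #|S| = g -> center S \in S) ->
  (\sum_(S : {set 'I_N} | (S \subset V) && (#|S| == g)) #|star_events E center S|
    <= num_dangling g E)%N.
Proof.
move=> centerS.
apply: (@leq_trans (\sum_(S : {set 'I_N} | (S \subset V) && (#|S| == g)) dangling g E S)).
  by apply: leq_sum => S /andP [_ /eqP cardS]; rewrite -cardS card_star_events_le ?centerS.
rewrite /num_dangling -sum1_card big_mkcond [X in (_ <= X)%N]big_mkcond /=.
by apply: leq_sum => S _; rewrite inE; case: (_ && _); case: (dangling _ _ _).
Qed.

Lemma prodr_if_mem (R : pzSemiRingType) (I : finType) (U B : {set I}) (x : R) :
  \prod_(u in U) (if u \in B then x else 1) = x ^+ #|U :&: B|.
Proof. by rewrite -big_mkcondr /= -prodr_const; apply: eq_bigl => u; rewrite inE. Qed.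

Lemma card_touching N (S : {set 'I_N}) : (#|touching S| <= 2 * #|S| * N)%N.
Proof.
have : touching S \subset setX S setT :|: setX setT S.
  by apply/subsetP => u; rewrite !inE; case/orP => ->; rewrite ?orbT.
move/subset_leq_card/leq_trans; apply; apply: leq_trans (leq_card_setU _ _) _.
by rewrite !cardsX cardsT card_ord [(N * _)%N]mulnC -mulnA mul2n -addnn.
Qed.

Lemma card_star_le N (S : {set 'I_N}) c v : c \in S -> v \notin S -> (#|star S c v| <= #|S|)%N.
Proof.
move=> cS vS; apply: leq_trans (leq_imset_card _ _) _.
move: (cardsD1 c (v |: S)); rewrite !inE cS orbT cardsU1 vS.
by move/eqP; rewrite eqn_add2l => /eqP ->.
Qed.

Section StarProb.
Variables (R : realFieldType) (N : nat) (b : R) (p : 'I_N -> 'I_N -> R).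
Hypotheses (N_gt0 : (0 < N)%N) (b_ge0 : 0 <= b) (bN : b / N%:R <= 1).
Hypotheses (p_sym : forall i j, p i j = p j i)
  (p_ge : forall i j, i != j -> N%:R^-1 <= p i j).

(* Each of the at most [#|S|] star edges has probability at least [1/N]; each
   of the other at most [2 #|S| N] pairs touching [S] meets [V_p], so it is
   absent with probability at least [1 - b/N]. *)
Lemma star_prob_ge (S : {set 'I_N}) c v : S \subset Vp b p -> c \in S -> v \notin S ->
  N%:R^-1 ^+ #|S| * (1 - b / N%:R) ^+ (2 * #|S| * N) <=
  \prod_(u in upper_pairs N) (if u \in touching S then
      (if u \in star S c v then p u.1 u.2 else 1 - p u.1 u.2) else 1).
Proof.
move=> SV cS vS; have sAT := star_sub v cS.
set A := star S c v; set q := 1 - b / N%:R; set U := upper_pairs N.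
have q_ge0 : 0 <= q by rewrite subr_ge0.
have q_le1 : q <= 1 by rewrite lerBlDr lerDl divr_ge0.
have inv_ge0 : 0 <= N%:R^-1 :> R by rewrite invr_ge0 ler0n.
have inv_le1 : N%:R^-1 <= 1 :> R by rewrite invf_le1 ?ltr0n ?ler1n.
apply: (@le_trans _ _ (\prod_(u in U) ((if u \in A then N%:R^-1 else 1) *
                                       (if u \in touching S then q else 1)))).
  rewrite big_split /= !prodr_if_mem; apply: ler_pM; rewrite ?exprn_ge0 //.
    apply: ler_wiXn2l => //; apply: leq_trans (subset_leq_card (subsetIr _ _)) _.
    exact: card_star_le.
  apply: ler_wiXn2l => //; apply: leq_trans (subset_leq_card (subsetIr _ _)) _.
  exact: card_touching.
apply: ler_prod => -[i j]; rewrite inE /= => ij.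
have {}ij : i != j by rewrite neq_ltn ij.
have p_small : (i, j) \in touching S -> p i j <= b / N%:R.
  rewrite inE /= => /orP [] /(subsetP SV); rewrite inE => /forallP.
    by move/(_ j); rewrite eq_sym ij => /ltW.
  by move/(_ i); rewrite ij p_sym => /ltW.
case: (boolP ((i, j) \in A)) => ijA.
  have ijT : (i, j) \in touching S by move/subsetP: sAT => /(_ _ ijA); rewrite inE => /andP [].
  rewrite ijT mulr_ge0 //=; apply: le_trans (p_ge ij).
  by rewrite -[X in _ <= X]mulr1 ler_wpM2l.
rewrite mul1r; case: (boolP ((i, j) \in touching S)) => ijT; last by rewrite ler01 lexx.
by rewrite q_ge0 lerB // p_small.
Qed.

End StarProb.

Lemma expected_dangling_ge_stars (R : numDomainType) N g (p : 'I_N -> 'I_N -> R) center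
    (V : {set 'I_N}) :
  (forall i j, i != j -> 0 <= p i j <= 1) ->
  (forall S : {set 'I_N}, #|S| = g -> center S \in S) ->
  \sum_(S : {set 'I_N} | (S \subset V) && (#|S| == g)) \sum_(v in ~: S)
    \sum_(E | is_graph E && (E :&: touching S == star S (center S) v)) graph_prob p E
  <= expected_dangling g p.
Proof.
move=> p_prob centerS.
have -> : \sum_(S : {set 'I_N} | (S \subset V) && (#|S| == g)) \sum_(v in ~: S)
    \sum_(E | is_graph E && (E :&: touching S == star S (center S) v)) graph_prob p E =
  \sum_(E | is_graph E) graph_prob p E *
    (\sum_(S : {set 'I_N} | (S \subset V) && (#|S| == g)) #|star_events E center S|)%:R.
  under [RHS]eq_bigr => E _ do rewrite natr_sum mulr_sumr.
  rewrite [RHS]exchange_big; apply: eq_bigr => S _.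
  under [RHS]eq_bigr => E _ do rewrite card_star_events natr_sum mulr_sumr.
  rewrite [RHS]exchange_big; apply: eq_bigr => v _.
  by rewrite big_mkcondr /=; apply: eq_bigr => E _; case: (_ == _); rewrite ?mulr1 ?mulr0.
apply: ler_sum => E E_graph; apply: ler_wpM2l; first exact: graph_prob_ge0.
by rewrite ler_nat sum_star_events_le.
Qed.

Lemma expected_dangling_ge (R : realFieldType) N g (b : R) (p : 'I_N -> 'I_N -> R) :
  (0 < N)%N -> (0 < g)%N -> 0 <= b -> b / N%:R <= 1 ->
  (forall i j, p i j = p j i) ->
  (forall i j, i != j -> N%:R^-1 <= p i j) -> (forall i j, i != j -> p i j <= 1) ->
  (N%:R^-1 ^+ g * (1 - b / N%:R) ^+ (2 * g * N)) *+ (N - g) *+ 'C(#|Vp b p|, g)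
  <= expected_dangling g p.
Proof.
move=> N_gt0 g_gt0 b_ge0 bN p_sym p_ge p_le1.
pose center (S : {set 'I_N}) := odflt (Ordinal N_gt0) [pick x in S].
have centerS (S : {set 'I_N}) : #|S| = g -> center S \in S.
  rewrite /center => cardS; case: pickP => [x // | S0].
  by move: g_gt0; rewrite -cardS (eq_card0 S0).
have p_prob i j : i != j -> 0 <= p i j <= 1.
  by move=> ij; rewrite p_le1 // andbT (le_trans _ (p_ge _ _ ij)) // invr_ge0.
apply: (le_trans _ (expected_dangling_ge_stars (Vp b p) p_prob centerS)).
rewrite -cards_draws -sumr_const.
rewrite (eq_bigl (fun S : {set 'I_N} => (S \subset Vp b p) && (#|S| == g))); last first.
  by move=> S; rewrite inE.
apply: ler_sum => S /andP [SV /eqP cardS].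
have cardCS : #|~: S| = (N - g)%N by rewrite cardsCs setCK card_ord cardS.
rewrite -cardCS -sumr_const; apply: ler_sum => v; rewrite inE => vS.
rewrite graph_prob_marginal ?star_sub ?centerS // -cardS.
exact: (star_prob_ge N_gt0 b_ge0 bN p_sym p_ge SV (centerS S cardS) vS).
Qed.

(** * Numerical estimates *)

Lemma ffact_ge m k : ((m - k) ^ k <= m ^_ k)%N.
Proof.
rewrite ffact_prod; have := prod_nat_const 'I_k (m - k); rewrite card_ord => <-.
apply: leq_prod => i _.
by apply: leq_sub2l; rewrite ltnW.
Qed.

Lemma bin_ge (R : realFieldType) m k :
  ((m - k)%N%:R ^+ k / (k`!)%:R <= ('C(m, k))%:R :> R).
Proof. by rewrite ler_pdivrMr ?ltr0n ?fact_gt0 // -natrX -natrM bin_ffact ler_nat ffact_ge. Qed.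

Lemma bernoulli_ineq (R : realFieldType) (x : R) n : 0 <= x -> x <= 1 ->
  1 - n%:R * x <= (1 - x) ^+ n.
Proof.
move=> x_ge0 x_le1; elim: n => [|n IH]; first by rewrite mul0r subr0 expr0.
rewrite exprS -natr1; apply: le_trans (ler_wpM2l _ IH); last lra.
have : 0 <= n%:R :> R by apply: ler0n.
nra.
Qed.

Lemma expr_one_sub_ge_quarter (R : realFieldType) (x : R) n : 0 <= x ->
  n%:R * x <= 3 / 4 -> 1 / 4 <= (1 - x) ^+ n.
Proof.
move=> x_ge0 nx; case: n nx => [|n] nx; first by rewrite expr0; lra.
have x_le1 : x <= 1.
  suff : x <= n.+1%:R * x by lra.
  by rewrite -[X in X <= _]mul1r ler_wpM2r // ler1n.
by apply: le_trans (bernoulli_ineq _ x_ge0 x_le1); lra.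
Qed.

(* Cut the exponent [2 g N] into at most [4 K g] blocks of length [n1 ~ N / 2K]. *)
Lemma expr_one_sub_div_ge (R : realFieldType) (b : R) K N g :
  0 <= b -> b <= K%:R -> (0 < K)%N -> (4 * K <= N)%N ->
  (1 / 4) ^+ (4 * K * g) <= (1 - b / N%:R) ^+ (2 * g * N).
Proof.
move=> b_ge0 bK K_gt0 NK.
have N_gt0 : 0 < N%:R :> R by rewrite ltr0n; lia.
set q := 1 - b / N%:R; set n1 := (N %/ (2 * K)).+1.
have bN_ge0 : 0 <= b / N%:R by rewrite divr_ge0.
have bN_le1 : b / N%:R <= 1 / 4.
  rewrite ler_pdivrMr // (le_trans bK) //.
  have : (4 * K)%:R <= N%:R :> R by rewrite ler_nat.
  rewrite natrM; lra.
have [n1_lb n1_ub] : (N <= 2 * K * n1)%N /\ (4 * K * n1 <= 3 * N)%N.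
  have := divn_eq N (2 * K); have : (N %% (2 * K) < 2 * K)%N by rewrite ltn_pmod ?muln_gt0.
  rewrite /n1; move: (N %/ (2 * K))%N (N %% (2 * K))%N => a r; nia.
have quarter : 1 / 4 <= q ^+ n1.
  apply: expr_one_sub_ge_quarter => //.
  have : (4 * K * n1)%:R <= (3 * N)%:R :> R by rewrite ler_nat.
  rewrite !natrM mulrA ler_pdivrMr // => h.
  have : n1%:R * b <= n1%:R * K%:R by apply: ler_wpM2l; rewrite ?ler0n.
  lra.
apply: (@le_trans _ _ (q ^+ (n1 * (4 * K * g)))).
  rewrite [X in _ <= X]exprM; apply: lerXn2r; rewrite ?nnegrE //; lra.
by apply: ler_wiXn2l; [rewrite subr_ge0; lra | rewrite lerBlDr lerDl | nia].
Qed.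

Lemma lower_bound_linear (R : realFieldType) (g N m : nat) (eta Q Q' : R) :
  0 < eta -> 0 <= Q -> Q <= Q' -> (2 * g <= N)%N -> g%:R <= eta * N%:R / 2 ->
  eta * N%:R < m%:R ->
  (eta / 2) ^+ g / (g`!)%:R / 2 * Q * N%:R <= (N%:R^-1 ^+ g * Q') *+ (N - g) *+ 'C(m, g).
Proof.
move=> eta_gt0 Q_ge0 QQ' gN g_small m_large.
have [-> | N_gt0] := posnP N; first by rewrite mulr0 mul0rn.
have N_pos : 0 < N%:R :> R by rewrite ltr0n.
have fact_pos : 0 < (g`!)%:R :> R by rewrite ltr0n fact_gt0.
have -> : (eta / 2) ^+ g / (g`!)%:R / 2 * Q * N%:R =
    (eta * N%:R / 2) ^+ g / (g`!)%:R * (N%:R^-1 ^+ g * Q) * (N%:R / 2).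
  have Ng_neq0 : N%:R ^+ g != 0 :> R by rewrite expf_neq0 ?gt_eqF.
  rewrite [eta * N%:R / 2]mulrAC exprVn; move: Ng_neq0.
  set e := (eta / 2) ^+ g; rewrite exprMn -/e; set y := N%:R ^+ g => Ng_neq0.
  by field; rewrite Ng_neq0 gt_eqF.
have etaN_ge0 : 0 <= eta * N%:R by rewrite mulr_ge0 ?ler0n ?ltW.
have binom : (eta * N%:R / 2) ^+ g / (g`!)%:R <= ('C(m, g))%:R :> R.
  apply: le_trans (bin_ge _ m g); rewrite ler_wpM2r ?invr_ge0 ?ler0n //.
  apply: lerXn2r; rewrite ?nnegrE ?ler0n //; first by rewrite divr_ge0.
  have gm : (g <= m)%N by rewrite -(ler_nat R); lra.
  by rewrite natrB //; lra.
have half : N%:R / 2 <= (N - g)%N%:R :> R.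
  have : (2 * g)%:R <= N%:R :> R by rewrite ler_nat.
  by rewrite natrB ?natrM; [lra | lia].
have inv_ge0 : 0 <= N%:R^-1 ^+ g :> R by rewrite exprn_ge0 // invr_ge0 ler0n.
have -> : (N%:R^-1 ^+ g * Q') *+ (N - g) *+ 'C(m, g) =
    'C(m, g)%:R * (N%:R^-1 ^+ g * Q') * (N - g)%N%:R.
  by rewrite -mulrnA -[_ *+ (_ * _)]mulr_natl natrM; ring.
have binom_ge0 : 0 <= (eta * N%:R / 2) ^+ g / (g`!)%:R.
  by rewrite divr_ge0 ?exprn_ge0 ?divr_ge0 ?ler0n.
have invQ_ge0 : 0 <= N%:R^-1 ^+ g * Q by rewrite mulr_ge0.
apply: ler_pM => //; [exact: mulr_ge0 | by rewrite divr_ge0 ?ler0n |].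
by apply: ler_pM => //; rewrite ler_wpM2l.
Qed.

Theorem theorem3p4 (R : archiRealFieldType) (g : nat) (eps b eta : R) :
  (0 < g)%N -> 0 < eps -> 0 < b -> 0 < eta ->
  exists c : R, exists N0 : nat, 0 < c /\
    forall (N : nat) (p : 'I_N -> 'I_N -> R),
      (N0 <= N)%N ->
      (forall i j, p i j = p j i) ->
      (forall i j, i != j -> (1 + eps) / N%:R < p i j) ->
      (forall i j, i != j -> p i j <= 1) ->
      eta * N%:R < (#|Vp b p|)%:R ->
      c * N%:R <= expected_dangling g p /\ expected_dangling g p <= N%:R.
Proof.
move=> g_gt0 eps_gt0 b_gt0 eta_gt0.
pose K := Num.Def.archi_bound b; pose M := Num.Def.archi_bound (2 * g%:R / eta).
have bK : b < K%:R by apply: archi_boundP; lra.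
have K_gt0 : (0 < K)%N by rewrite -(ltr0n R); lra.
have gM : 2 * g%:R / eta < M%:R by apply: archi_boundP; rewrite divr_ge0 ?mulr_ge0 ?ler0n ?ltW.
exists ((eta / 2) ^+ g / (g`!)%:R / 2 * (1 / 4) ^+ (4 * K * g)), (4 * K + 2 * g + M)%N.
split=> [|N p N_large p_sym p_gt p_le1 V_large].
  by rewrite mulr_gt0 ?divr_gt0 ?exprn_gt0 ?divr_gt0 ?ltr0n ?fact_gt0.
have N_pos : 0 < N%:R :> R by rewrite ltr0n; lia.
have p_ge i j : i != j -> N%:R^-1 <= p i j.
  by move=> ij; apply: le_trans (ltW (p_gt i j ij)); rewrite ler_pdivlMr // mulVf ?gt_eqF //; lra.
have p_prob i j : i != j -> 0 <= p i j <= 1.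
  by move=> ij; rewrite p_le1 // andbT (le_trans _ (p_ge i j ij)) // invr_ge0 ltW.
split; last exact: (expected_dangling_le p_prob g_gt0).
have N_gt0 : (0 < N)%N by lia.
have bN : b / N%:R <= 1.
  by rewrite ler_pdivrMr // mul1r (le_trans (ltW bK)) // ler_nat; lia.
apply: le_trans (expected_dangling_ge N_gt0 g_gt0 (ltW b_gt0) bN p_sym p_ge p_le1).
have KN : (4 * K <= N)%N by lia.
apply: lower_bound_linear => //; first by rewrite exprn_ge0 // divr_ge0.
- exact: (expr_one_sub_div_ge _ (ltW b_gt0) (ltW bK) K_gt0 KN).
- lia.
have : M%:R * eta <= N%:R * eta by apply: ler_wpM2r; [exact: ltW | rewrite ler_nat; lia].
move: gM; rewrite ltr_pdivrMr //; lra.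
Qed.
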